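(* For all $\alpha,\beta\in K$, $$\sum_{s=1}^\kappa\Big(\frac12-\frac s\kappa\Big)(\alpha|\sigma^s\beta)=-\langle\alpha,\beta\rangle+\mathrm{rk}(\alpha)\deg(\beta)-\mathrm{rk}(\beta)\deg(\alpha),$$ where $\kappa=2(n-2)$.
   Context: Fix an integer $n\ge3$; $X=\mathbb{P}^1_{n-2,2,2}$ is the orbifold projective line with orbifold points of orders $n-2,2,2$; $a_1=n-2$, $a_2=a_3=2$. Its $K$-ring is $K=\mathbb{Z}[L_1,L_2,L_3]/\langle L_i^{a_i}-L_j^{a_j},(L_i-1)(L_j-1):i\neq j\rangle$, $L:=L_1^{n-2}$. $\mathrm{rk}:K\to\mathbb{Z}$ is the ring map $L_i\mapsto1$; $\deg:K\to\mathbb{Q}$ is additive with $\deg(1)=0$, $\deg(L_i)=1/a_i$, $\deg(EF)=\mathrm{rk}(E)\deg(F)+\mathrm{rk}(F)\deg(E)$. $\langle a,b\rangle=\chi(a^\vee\otimes b)$ is the Euler pairing (orbifold holomorphic Euler characteristic) and $(a|b)=\langle a,b\rangle+\langle b,a\rangle$ is the intersection pairing. $\sigma:K\to K$ is multiplication by the tangent bundle class $T=L_1+L_2+L_3-L-1$. *)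

From mathcomp Require Import all_boot all_order all_algebra.
Set Implicit Arguments. Unset Strict Implicit. Unset Printing Implicit Defensive.
Import Order.TTheory GRing.Theory Num.Theory.
Local Open Scope ring_scope.

(* Model of the K-ring K of X = P^1_{n-2,2,2}.
   Since each L_i is invertible in K (L^{-1} = 2 - L and L_i^{-1} = L_i^{a_i-1} L^{-1}),
   K is the quotient of the Laurent polynomial ring Z[L1^{+-1},L2^{+-1},L3^{+-1}] by the
   ideal <L_i^{a_i}-L_j^{a_j}, (L_i-1)(L_j-1)>.  An element of K is represented by a formal
   Z-linear combination (a finite list) of Laurent monomials L1^e1 L2^e2 L3^e3, and every
   function below (rk, deg, chi, and the operations) is defined on representatives and is
   compatible with the quotient. *)

Definition mon := (int * int * int)%type.
Definition Kel := seq (int * mon).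

Definition e1 (m : mon) : int := m.1.1.
Definition e2 (m : mon) : int := m.1.2.
Definition e3 (m : mon) : int := m.2.

Definition a1 (n : nat) : nat := (n - 2)%N.
Definition a2 : nat := 2%N.
Definition a3 : nat := 2%N.

Definition monmul (m m' : mon) : mon := (e1 m + e1 m', e2 m + e2 m', e3 m + e3 m').

Definition Kadd (a b : Kel) : Kel := a ++ b.
Definition Kmul (a b : Kel) : Kel :=
  [seq (p.1 * q.1, monmul p.2 q.2) | p <- a, q <- b].
Definition Kone : Kel := [:: (1, (0, 0, 0))].

Definition Kdual (a : Kel) : Kel :=
  [seq (p.1, (- e1 p.2, - e2 p.2, - e3 p.2)) | p <- a].

Definition Ttan (n : nat) : Kel :=
  [:: (1, (1, 0, 0)); (1, (0, 1, 0)); (1, (0, 0, 1));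
      (-1, ((a1 n)%:Z, 0, 0)); (-1, (0, 0, 0))].

Definition sigma (n : nat) (a : Kel) : Kel := Kmul (Ttan n) a.

Definition rk (a : Kel) : int := \sum_(p <- a) p.1.

Definition mondeg (n : nat) (m : mon) : rat :=
  (e1 m)%:~R / (a1 n)%:R + (e2 m)%:~R / a2%:R + (e3 m)%:~R / a3%:R.
Definition deg (n : nat) (a : Kel) : rat := \sum_(p <- a) p.1%:~R * mondeg n p.2.

(* Orbifold holomorphic Euler characteristic (Riemann-Roch for weighted projective lines):
   the line bundle O(x) with x = sum e_i x_i has normal form l c + sum l_i x_i with
   0 <= l_i < a_i, l = sum floor(e_i / a_i), and chi(O(x)) = dim H^0 - dim H^1 = l + 1.
   ((m %/ d)%Z is floor division for d > 0.) *)
Definition monchi (n : nat) (m : mon) : int :=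
  1 + (e1 m %/ (a1 n)%:Z)%Z + (e2 m %/ a2%:Z)%Z + (e3 m %/ a3%:Z)%Z.
Definition chi (n : nat) (a : Kel) : int := \sum_(p <- a) p.1 * monchi n p.2.

Definition euler (n : nat) (a b : Kel) : int := chi n (Kmul (Kdual a) b).
Definition ipair (n : nat) (a b : Kel) : int := euler n a b + euler n b a.

(* Everything is bilinear, so it suffices to take alpha = L^c and beta = L^m with
   exponent vectors c, m.  Floor division gives, with d = m - c,
     (L^c | L^m) = 2 + sum_i ([a_i | d_i] - 1),
   a constant plus one a_i-periodic function of each coordinate d_i.  Transposed to
   functions of m, sigma shifts every coordinate by one at once: the coefficients
   of T sum to rk T = 1, and L = L_1^(n-2) is invisible to an (n-2)-periodic
   function.  The weighted sum over s = 1..kappa then splits into one sum per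
   coordinate; as a_i divides kappa it may be computed over one period, where
   [a_i | d_i + s] singles out one s and yields the fractional part {d_i / a_i}.
   The constant contributes -1, and
     -1 + sum_i {d_i / a_i} = -chi(L^d) + deg L^m - deg L^c. *)

From mathcomp Require Import all_boot all_order all_algebra.
From mathcomp Require Import zify ring.
Import Order.TTheory GRing.Theory Num.Theory.
Set Implicit Arguments. Unset Strict Implicit. Unset Printing Implicit Defensive.
Local Open Scope ring_scope.

Section WeightedSum.
Variable R : numFieldType.

Definition wsum (N : nat) (f : nat -> R) : R :=
  \sum_(1 <= s < N.+1) (1 / 2 - s%:R / N%:R) * f s.

Lemma eq_wsum N f g : (forall s, (0 < s <= N)%N -> f s = g s) -> wsum N f = wsum N g.
Proof. by move=> eq_fg; apply: eq_big_nat => s /eq_fg ->. Qed.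

Lemma wsumD N f g : wsum N (fun s => f s + g s) = wsum N f + wsum N g.
Proof. by rewrite /wsum -big_split; apply: eq_bigr => s _; rewrite mulrDr. Qed.

Lemma sumr_affine (x y : R) m :
  \sum_(0 <= j < m) (x - j%:R * y) = m%:R * x - y * (m%:R * (m%:R - 1) / 2).
Proof.
elim: m => [|m IH]; first by rewrite big_geq // !mul0r mulr0 subr0.
by rewrite big_nat_recr //= IH -natr1; field.
Qed.

Lemma wsum_const N (c : R) : (0 < N)%N -> wsum N (fun=> c) = - c / 2.
Proof.
move=> N_gt0; have N_neq0 : N%:R != 0 :> R by rewrite pnatr_eq0 -lt0n.
rewrite /wsum -big_distrl big_add1 /=.
rewrite (eq_bigr (fun j => (1 / 2 - 1 / N%:R) - j%:R * (1 / N%:R))) => [|j _].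
  by rewrite sumr_affine; field.
by rewrite -natr1; field.
Qed.

Lemma wsum_delta N t0 : (0 < t0 <= N)%N ->
  wsum N (fun t => (t == t0)%:R) = 1 / 2 - t0%:R / N%:R.
Proof.
move=> t0_range; rewrite /wsum.
under eq_bigr do rewrite mulr_natr mulrb.
by rewrite -big_mkcond big_nat1_eq ltnS t0_range.
Qed.

Lemma wsum_periodic b N f : (0 < N)%N -> (b %| N)%N ->
  (forall s, f (s + b)%N = f s) -> wsum N f = wsum b f.
Proof.
move=> N_gt0 /dvdnP[m N_eq] f_per.
have [m_gt0 b_gt0] : (0 < m)%N /\ (0 < b)%N by split; nia.
have f_perm j s : f (s + j * b)%N = f s.
  by elim: j => [|j IH]; rewrite ?addn0 // mulSn addnA addnAC f_per.
have sum_block_weights t : \sum_(0 <= j < m) (1 / 2 - (t + j * b).+1%:R / N%:R : R)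
    = 1 / 2 - t.+1%:R / b%:R.
  rewrite (eq_bigr (fun j => (1 / 2 - t.+1%:R / N%:R) - j%:R * (b%:R / N%:R))) => [|j _].
    rewrite sumr_affine N_eq natrM; field.
    by rewrite !pnatr_eq0 -!lt0n m_gt0 b_gt0.
  by rewrite -addSn natrD natrM; field; rewrite N_eq natrM mulf_neq0 // pnatr_eq0 -lt0n.
rewrite /wsum !big_add1 /= N_eq big_nat_mul.
under eq_bigr => j _.
  rewrite -{1}[(j * b)%N]add0n big_addn mulSn addnK.
  under eq_bigr => t _ do rewrite -addSn f_perm -N_eq.
  over.
rewrite exchange_big_nat /=; apply: eq_bigr => t _.
by rewrite -big_distrl /= sum_block_weights.
Qed.

End WeightedSum.

Definition dvd_defect {R : pzRingType} (b : nat) (k : int) : R :=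
  if (b%:Z %| k)%Z then 0 else -1.

Lemma dvd_defectDl (R : pzRingType) b k :
  dvd_defect b (b%:Z + k) = dvd_defect b k :> R.
Proof. by rewrite /dvd_defect rpredDl ?dvdzz. Qed.

Lemma rmorph_dvd_defect (R S : pzRingType) (f : {rmorphism R -> S}) b k :
  f (dvd_defect b k) = dvd_defect b k.
Proof. by rewrite /dvd_defect; case: ifP; rewrite ?rmorph0 ?rmorphN1. Qed.

Lemma divz_add_divz_opp (b : nat) (k : int) : (0 < b)%N ->
  (k %/ b)%Z + (- k %/ b)%Z = dvd_defect b k.
Proof.
move=> b_gt0; have b_neq0 : b%:Z != 0 by rewrite eqz_nat -lt0n.
rewrite /dvd_defect; case: ifP => [/dvdzP[q ->] | /negbT/dvdz_mod0P/eqP r_neq0].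
  by rewrite -mulNr !mulzK // addrN.
have r_range : 0 < (k %% b)%Z < b%:Z.
  by rewrite lt_def r_neq0 modz_ge0 ?ltz_pmod // ltz_nat.
rewrite {2}(divz_eq k b).
have -> : - ((k %/ b)%Z * b + (k %% b)%Z) = (- (k %/ b)%Z - 1) * b + (b%:Z - (k %% b)%Z).
  by ring.
rewrite divzMDl // (@divz_small (b%:Z - (k %% b)%Z)); last lia.
ring.
Qed.

Lemma dvdz_add_small (b : nat) (r t : int) : 0 <= r < b%:Z -> 0 < t <= b%:Z ->
  (b%:Z %| r + t)%Z = (r + t == b%:Z).
Proof.
move=> r_range t_range; apply/dvdzP/eqP => [[k rt_eq] | ->]; last by exists 1; rewrite mul1r.
have b_gt0 : 0 < b%:Z by lia.
have k_eq1 : k = 1 by nia.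
by rewrite rt_eq k_eq1 mul1r.
Qed.

Lemma wsum_dvd_defect_period (R : numFieldType) (b : nat) (d : int) : (0 < b)%N ->
  wsum b (fun t => dvd_defect b (d + t%:Z)) = d%:~R / b%:R - ((d %/ b)%Z)%:~R :> R.
Proof.
move=> b_gt0; have b_neq0 : b%:R != 0 :> R by rewrite pnatr_eq0 -lt0n.
have r_range : 0 <= (d %% b)%Z < b%:Z by rewrite modz_ge0 ?ltz_pmod // eqz_nat -lt0n.
set r := `|(d %% b)%Z|%N.
have r_eq : (d %% b)%Z = r%:Z by rewrite /r abszE ger0_norm //; case/andP: r_range.
have r_lt_b : (r < b)%N by rewrite -ltz_nat -r_eq; case/andP: r_range.
have dvd_eq t : (0 < t <= b)%N -> (b%:Z %| d + t%:Z)%Z = (t == (b - r)%N).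
  move=> t_range; rewrite {1}(divz_eq d b) -addrA rpredDl ?dvdz_mull // r_eq.
  by rewrite dvdz_add_small; [apply/eqP/eqP; lia | lia | lia].
rewrite (@eq_wsum _ _ _ (fun t => (t == (b - r)%N)%:R + -1)) => [|t /dvd_eq]; last first.
  by rewrite /dvd_defect => ->; case: eqP; rewrite ?addrN ?add0r.
rewrite wsumD wsum_delta ?wsum_const //; last by apply/andP; split; lia.
by rewrite {1}(divz_eq d b) r_eq intrD intrM natrB 1?ltnW //; field.
Qed.

Lemma wsum_dvd_defect (R : numFieldType) (b N : nat) (d : int) :
  (0 < N)%N -> (b %| N)%N ->
  wsum N (fun s => dvd_defect b (d + s%:Z)) = d%:~R / b%:R - ((d %/ b)%Z)%:~R :> R.
Proof.
move=> N_gt0 b_dvd_N; have b_gt0 : (0 < b)%N := dvdn_gt0 N_gt0 b_dvd_N.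
rewrite (wsum_periodic N_gt0 b_dvd_N) ?wsum_dvd_defect_period // => s.
by rewrite PoszD addrA addrC dvd_defectDl.
Qed.

Definition mneg (m : mon) : mon := (- e1 m, - e2 m, - e3 m).

Section LinearExtension.
Variable R : comPzRingType.

Definition lin (h : mon -> R) (x : Kel) : R := \sum_(p <- x) p.1%:~R * h p.2.

Definition bilin (g : mon -> mon -> R) (x y : Kel) : R := lin (fun c => lin (g c) y) x.

Lemma eq_lin h1 h2 x : h1 =1 h2 -> lin h1 x = lin h2 x.
Proof. by move=> eq_h; apply: eq_bigr => p _; rewrite eq_h. Qed.

Lemma linD h1 h2 x : lin (fun m => h1 m + h2 m) x = lin h1 x + lin h2 x.
Proof. by rewrite /lin -big_split; apply: eq_bigr => p _; rewrite mulrDr. Qed.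

Lemma linN h x : lin (fun m => - h m) x = - lin h x.
Proof. by rewrite /lin -sumrN; apply: eq_bigr => p _; rewrite mulrN. Qed.

Lemma linMl k h x : lin (fun m => k * h m) x = k * lin h x.
Proof. by rewrite /lin big_distrr; apply: eq_bigr => p _; rewrite mulrCA. Qed.

Lemma lin_sum (I : Type) (r : seq I) (F : I -> mon -> R) x :
  lin (fun m => \sum_(i <- r) F i m) x = \sum_(i <- r) lin (F i) x.
Proof. by rewrite /lin exchange_big; apply: eq_bigr => p _; rewrite big_distrr. Qed.

Lemma lin_const y x : lin (fun=> y) x = (rk x)%:~R * y.
Proof. by rewrite /rk rmorph_sum mulr_suml. Qed.

Lemma lin_Kdual h x : lin h (Kdual x) = lin (fun m => h (mneg m)) x.
Proof. by rewrite /lin big_map. Qed.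

Lemma eq_bilin g1 g2 x y : (forall c m, g1 c m = g2 c m) -> bilin g1 x y = bilin g2 x y.
Proof. by move=> eq_g; apply: eq_lin => c; apply: eq_lin. Qed.

Lemma bilinD g1 g2 x y :
  bilin (fun c m => g1 c m + g2 c m) x y = bilin g1 x y + bilin g2 x y.
Proof. by rewrite /bilin -linD; apply: eq_lin => c; rewrite linD. Qed.

Lemma bilinN g x y : bilin (fun c m => - g c m) x y = - bilin g x y.
Proof. by rewrite /bilin -linN; apply: eq_lin => c; rewrite linN. Qed.

Lemma bilin_swap g x y : bilin g x y = bilin (fun m c => g c m) y x.
Proof.
rewrite /bilin /lin; under eq_bigr do rewrite big_distrr.
rewrite exchange_big; apply: eq_bigr => q _ /=.
by rewrite big_distrr; apply: eq_bigr => p _ /=; rewrite mulrCA.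
Qed.

Lemma lin_Kmul h x y : lin h (Kmul x y) = bilin (fun c m => h (monmul c m)) x y.
Proof.
rewrite /bilin /lin big_allpairs_dep; apply: eq_bigr => p _.
by rewrite big_distrr; apply: eq_bigr => q _ /=; rewrite intrM mulrA.
Qed.

Definition sigma_adj n (h : mon -> R) (m : mon) : R :=
  lin (fun t => h (monmul t m)) (Ttan n).

Lemma lin_sigma n h x : lin h (sigma n x) = lin (sigma_adj n h) x.
Proof. by rewrite /sigma lin_Kmul bilin_swap. Qed.

Lemma bilin_iter_sigma n s g x y :
  bilin g x (iter s (sigma n) y) = bilin (fun c => iter s (sigma_adj n) (g c)) x y.
Proof.
apply: eq_lin => c; elim: s (g c) => [|s IH] h //.
by rewrite iterS lin_sigma IH iterSr.
Qed.

Definition coordsum (C : R) (f1 f2 f3 : int -> R) (m : mon) : R :=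
  C + f1 (e1 m) + f2 (e2 m) + f3 (e3 m).

Lemma sigma_adj_coordsum n C f1 f2 f3 : (forall k, f1 ((a1 n)%:Z + k) = f1 k) ->
  sigma_adj n (coordsum C f1 f2 f3)
  =1 coordsum C (fun k => f1 (k + 1)) (fun k => f2 (k + 1)) (fun k => f3 (k + 1)).
Proof.
move=> f1_per [[m1 m2] m3].
rewrite /sigma_adj /lin /coordsum /monmul /e1 /e2 /e3 /= !big_cons big_nil /=.
by rewrite f1_per rmorph1 rmorphN1 !add0r ![1 + _]addrC; ring.
Qed.

Lemma iter_sigma_adj_coordsum n s C f1 f2 f3 h :
  (forall k, f1 ((a1 n)%:Z + k) = f1 k) -> h =1 coordsum C f1 f2 f3 ->
  iter s (sigma_adj n) h
  =1 coordsum C (fun k => f1 (k + s%:Z)) (fun k => f2 (k + s%:Z)) (fun k => f3 (k + s%:Z)).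
Proof.
move=> f1_per h_eq; elim: s => [|s IH] m; first by rewrite /= h_eq /coordsum !addr0.
rewrite iterS /sigma_adj (eq_lin _ (fun t => IH (monmul t m))) -/(sigma_adj _ _ m).
by rewrite sigma_adj_coordsum => [|k]; rewrite /coordsum /= ?intS -?addrA ?f1_per.
Qed.

End LinearExtension.

Lemma rmorph_lin (R S : comPzRingType) (f : {rmorphism R -> S}) h x :
  f (lin h x) = lin (fun m => f (h m)) x.
Proof. by rewrite rmorph_sum; apply: eq_bigr => p _; rewrite rmorphM rmorph_int. Qed.

Lemma rmorph_bilin (R S : comPzRingType) (f : {rmorphism R -> S}) g x y :
  f (bilin g x y) = bilin (fun c m => f (g c m)) x y.
Proof. by rewrite rmorph_lin; apply: eq_lin => c; rewrite rmorph_lin. Qed.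

Lemma wsum_bilin (R : numFieldType) N (g : nat -> mon -> mon -> R) x y :
  wsum N (fun s => bilin (g s) x y) = bilin (fun c m => wsum N (fun s => g s c m)) x y.
Proof.
rewrite /wsum /bilin; under eq_bigr do rewrite -linMl.
rewrite -lin_sum; apply: eq_lin => c.
by under eq_bigr do rewrite -linMl; rewrite -lin_sum.
Qed.

Lemma chi_lin n x : chi n x = lin (monchi n) x.
Proof. by apply: eq_bigr => p _; rewrite intz. Qed.

Lemma euler_bilin n x y :
  euler n x y = bilin (fun c m => monchi n (monmul (mneg c) m)) x y.
Proof. by rewrite /euler chi_lin lin_Kmul /bilin lin_Kdual. Qed.

Definition mpair n (c m : mon) : int :=
  monchi n (monmul (mneg c) m) + monchi n (monmul (mneg m) c).

Lemma ipair_bilin n x y : ipair n x y = bilin (mpair n) x y.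
Proof. by rewrite /ipair !euler_bilin [bilin _ y x]bilin_swap -bilinD. Qed.

Lemma mpair_coordsum n c : (0 < a1 n)%N ->
  mpair n c =1 coordsum 2 (fun k => dvd_defect (a1 n) (- e1 c + k))
    (fun k => dvd_defect a2 (- e2 c + k)) (fun k => dvd_defect a3 (- e3 c + k)).
Proof.
case: c => [[c1 c2] c3] a1_gt0 [[m1 m2] m3].
rewrite /mpair /monchi /coordsum /= -!divz_add_divz_opp //.
by rewrite !opprD !opprK (addrC c1) (addrC c2) (addrC c3); ring.
Qed.

Lemma wsum_iter_sigma_adj_mpair n c m : (3 <= n)%N ->
  wsum (2 * (n - 2)) (fun s => (iter s (sigma_adj n) (mpair n c) m)%:~R)
  = - (monchi n (monmul (mneg c) m))%:~R + mondeg n m - mondeg n c :> rat.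
Proof.
move=> n_ge3; have a1_gt0 : (0 < a1 n)%N by rewrite /a1; lia.
have N_gt0 : (0 < 2 * (n - 2))%N by lia.
pose d1 := - e1 c + e1 m; pose d2 := - e2 c + e2 m; pose d3 := - e3 c + e3 m.
rewrite (@eq_wsum _ _ _ (fun s => 2 + dvd_defect (a1 n) (d1 + s%:Z)
    + dvd_defect a2 (d2 + s%:Z) + dvd_defect a3 (d3 + s%:Z))) => [|s _]; last first.
  rewrite (iter_sigma_adj_coordsum s _ (mpair_coordsum c a1_gt0)) => [|k].
    by rewrite /coordsum /= !intrD !rmorph_dvd_defect !addrA.
  by rewrite addrCA dvd_defectDl.
have a1_dvd : (a1 n %| 2 * (n - 2))%N by apply: dvdn_mull.
have a2_dvd : (a2 %| 2 * (n - 2))%N by apply: dvdn_mulr.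
rewrite !wsumD wsum_const // !wsum_dvd_defect //.
rewrite /monchi /mondeg /d1 /d2 /d3 /= !intrD !intrN.
by field; rewrite !pnatr_eq0 -!lt0n a1_gt0.
Qed.

Theorem lemma10 (n : nat) (hn : (3 <= n)%N) (alpha beta : Kel) :
  \sum_(1 <= s < (2 * (n - 2)).+1)
     ((1 / 2 - s%:R / (2 * (n - 2))%:R) * (ipair n alpha (iter s (sigma n) beta))%:~R : rat)
  = - (euler n alpha beta)%:~R + (rk alpha)%:~R * deg n beta - (rk beta)%:~R * deg n alpha.
Proof.
rewrite -[LHS]/(wsum _ (fun s => (ipair n alpha (iter s (sigma n) beta))%:~R)).
under eq_wsum => s _ do rewrite ipair_bilin bilin_iter_sigma rmorph_bilin.
rewrite wsum_bilin euler_bilin rmorph_bilin -!lin_const.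
rewrite -[lin _ alpha]/(bilin (fun=> mondeg n) alpha beta).
rewrite -[lin _ beta]/(bilin (fun=> mondeg n) beta alpha) [bilin _ beta alpha]bilin_swap.
rewrite -!bilinN -!bilinD.
by apply: eq_bilin => c m; rewrite wsum_iter_sigma_adj_mpair.
Qed.
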